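(* Let $h>0$, $K>0$ and $g\in C(\mathbb{R}_+,\mathbb{R}_+)$ with $g(0)=0$, $g(K)=K$ and $\liminf_{x\to0+}g(x)/x>1$. Let $p_1,p_2$ satisfy $1<p_1<\liminf_{x\to0+}g(x)/x\le\limsup_{x\to0+}g(x)/x<p_2$, and for $i=1,2$ let $\lambda_i$ be the unique positive real root of $z=-1+p_ie^{-zh}$ (so $0<\lambda_1<\lambda_2$). Then for every nonnegative solution $\psi:\mathbb{R}\to\mathbb{R}_+$ of $x'(t)=-x(t)+g(x(t-h))$ with $\psi(-\infty)=0$ and $\psi(+\infty)=K$ there exist $\tau<0$ and $C_1,C_2>0$ such that $$C_1e^{\lambda_2t}\le\psi(t)\le C_2e^{\lambda_1t}\qquad\text{for all } t\le\tau.$$ *)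

From Stdlib Require Import Reals.
From Coquelicot Require Import Coquelicot.
Open Scope R_scope.

Definition inf_right0 (f : R -> R) (d : R) : Rbar :=
  Rbar_glb (fun z : Rbar => exists x, 0 < x < d /\ z = Finite (f x)).

Definition sup_right0 (f : R -> R) (d : R) : Rbar :=
  Rbar_lub (fun z : Rbar => exists x, 0 < x < d /\ z = Finite (f x)).

Definition liminf_right0 (f : R -> R) : Rbar :=
  Rbar_lub (fun y : Rbar => exists d, 0 < d /\ y = inf_right0 f d).

Definition limsup_right0 (f : R -> R) : Rbar :=
  Rbar_glb (fun y : Rbar => exists d, 0 < d /\ y = sup_right0 f d).

Definition continuous_on_Rplus (g : R -> R) : Prop :=
  forall x, 0 <= x ->
    filterlim g (within (fun y => 0 <= y) (locally x)) (locally (g x)).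

From Stdlib Require Import Reals Lra Classical.
From Coquelicot Require Import Coquelicot.
Open Scope R_scope.

(* Near [-oo] the solution is small, so [p1 x <= g x <= p2 x] applies to its
   delayed values.  For [w t = psi t * exp (- lambda * t)] the equation becomes
   [w' t = (1 + lambda) (w (t - h) - w t) + error], and the characteristic equation
   [1 + lambda = p exp (- lambda h)] makes the error term nonnegative for [lambda1]
   and nonpositive for [lambda2].  By the method of steps, a lower (resp. upper)
   bound of [w] on one delay interval then persists at all later times.  For
   [lambda1] this bounds [w] at every early time by a multiple of [w T]; for
   [lambda2] it shows that [w] cannot stay below [w T / 2] on a whole delay
   interval.  Together with [psi s exp (s - t) <= psi t], which holds as
   [g >= 0], this gives the two exponential bounds. *)

Lemma Rbar_lub_is_lub (E : Rbar -> Prop) : Rbar_is_lub E (Rbar_lub E).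
Proof. unfold Rbar_lub; now destruct (Rbar_ex_lub E). Qed.

Lemma Rbar_glb_is_glb (E : Rbar -> Prop) : Rbar_is_glb E (Rbar_glb E).
Proof. unfold Rbar_glb; now destruct (Rbar_ex_glb E). Qed.

Lemma Rbar_lub_ge (E : Rbar -> Prop) (z : Rbar) : E z -> Rbar_le z (Rbar_lub E).
Proof. apply Rbar_lub_is_lub. Qed.

Lemma Rbar_glb_le (E : Rbar -> Prop) (z : Rbar) : E z -> Rbar_le (Rbar_glb E) z.
Proof. apply Rbar_glb_is_glb. Qed.

Lemma Rbar_lt_lub (E : Rbar -> Prop) (y : Rbar) :
  Rbar_lt y (Rbar_lub E) -> exists z, E z /\ Rbar_lt y z.
Proof.
  intros Hy; apply NNPP; intros Hn.
  assert (Hle : Rbar_le (Rbar_lub E) y).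
  { apply Rbar_lub_is_lub; intros z Hz; apply Rbar_not_lt_le; intros Hzy; eauto. }
  exact (Rbar_lt_not_le _ _ Hy Hle).
Qed.

Lemma Rbar_glb_lt (E : Rbar -> Prop) (y : Rbar) :
  Rbar_lt (Rbar_glb E) y -> exists z, E z /\ Rbar_lt z y.
Proof.
  intros Hy; apply NNPP; intros Hn.
  assert (Hle : Rbar_le y (Rbar_glb E)).
  { apply Rbar_glb_is_glb; intros z Hz; apply Rbar_not_lt_le; intros Hzy; eauto. }
  exact (Rbar_lt_not_le _ _ Hy Hle).
Qed.

Lemma liminf_right0_gt (f : R -> R) (p : R) :
  Rbar_lt p (liminf_right0 f) -> exists d, 0 < d /\ forall x, 0 < x < d -> p < f x.
Proof.
  intros Hp; destruct (Rbar_lt_lub _ _ Hp) as [y [[d [Hd ->]] Hpy]].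
  exists d; split; [exact Hd |]; intros x Hx.
  apply (Rbar_lt_le_trans _ _ (Finite (f x)) Hpy), Rbar_glb_le; eauto.
Qed.

Lemma limsup_right0_lt (f : R -> R) (p : R) :
  Rbar_lt (limsup_right0 f) p -> exists d, 0 < d /\ forall x, 0 < x < d -> f x < p.
Proof.
  intros Hp; destruct (Rbar_glb_lt _ _ Hp) as [y [[d [Hd ->]] Hyp]].
  exists d; split; [exact Hd |]; intros x Hx.
  apply (Rbar_le_lt_trans (Finite (f x)) (sup_right0 f d) (Finite p));
    [apply Rbar_lub_ge; eauto | exact Hyp].
Qed.

Lemma mul_le_near0_of_liminf_ratio (g : R -> R) (p : R) : g 0 = 0 ->
  Rbar_lt p (liminf_right0 (fun x => g x / x)) ->
  exists d, 0 < d /\ forall x, 0 <= x < d -> p * x <= g x.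
Proof.
  intros g0 Hp; destruct (liminf_right0_gt _ _ Hp) as [d [Hd Hratio]].
  exists d; split; [exact Hd |]; intros x [[Hx | <-] Hxd]; [| rewrite g0; lra].
  assert (H := Hratio x (conj Hx Hxd)).
  assert (g x = g x / x * x) by (field; lra); nra.
Qed.

Lemma le_mul_near0_of_limsup_ratio (g : R -> R) (p : R) : g 0 = 0 ->
  Rbar_lt (limsup_right0 (fun x => g x / x)) p ->
  exists d, 0 < d /\ forall x, 0 <= x < d -> g x <= p * x.
Proof.
  intros g0 Hp; destruct (limsup_right0_lt _ _ Hp) as [d [Hd Hratio]].
  exists d; split; [exact Hd |]; intros x [[Hx | <-] Hxd]; [| rewrite g0; lra].
  assert (H := Hratio x (conj Hx Hxd)).
  assert (g x = g x / x * x) by (field; lra); nra.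
Qed.

Lemma exp_le (x y : R) : x <= y -> exp x <= exp y.
Proof. intros [H | ->]; [left; now apply exp_increasing | lra]. Qed.

Lemma nondecreasing_of_derive_nonneg (F dF : R -> R) (a b : R) : a <= b ->
  (forall u, a <= u <= b -> is_derive F u (dF u)) ->
  (forall u, a <= u <= b -> 0 <= dF u) -> F a <= F b.
Proof.
  intros [Hab | <-] HF HdF; [| lra].
  destruct (MVT_cor2 F dF a b Hab) as [c [Hc Hcab]].
  - intros c Hc; apply is_derive_Reals, HF; lra.
  - assert (0 <= dF c) by (apply HdF; lra).
    assert (0 <= dF c * (b - a)) by (apply Rmult_le_pos; lra); lra.
Qed.

Lemma is_derive_shift_exp (w : R -> R) (dw c B u : R) : is_derive w u dw ->
  is_derive (fun t => (w t - B) * exp (c * t)) u ((dw + c * (w u - B)) * exp (c * u)).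
Proof.
  intros Hw.
  replace ((dw + c * (w u - B)) * exp (c * u))
    with ((dw - 0) * exp (c * u) + (w u - B) * (c * exp (c * u))) by ring.
  apply (is_derive_mult (fun t => w t - B) (fun t => exp (c * t))).
  - apply (is_derive_minus w (fun _ => B));
      [exact Hw | apply is_derive_Reals, derivable_pt_lim_const].
  - auto_derive; [exact I | ring].
  - intros; apply Rmult_comm.
Qed.

Section MethodOfSteps.

Variables (w dw : R -> R) (c h B T : R).
Hypothesis h_pos : 0 < h.
Hypothesis w_derive : forall t, t <= T -> is_derive w t (dw t).
Hypothesis w_delay_ineq : forall t, t <= T -> B <= w (t - h) -> 0 <= dw t + c * (w t - B).

(* Where [w (t - h) >= B], the function [(w t - B) exp (c t)] is nondecreasing. *)
Lemma delay_lower_bound_step (a : R) :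
  (forall u, a - h <= u <= a -> B <= w u) ->
  forall t, a <= t <= a + h -> t <= T -> B <= w t.
Proof.
  intros Hprev t Ht HtT.
  assert (Hmono : (w a - B) * exp (c * a) <= (w t - B) * exp (c * t)).
  { apply (nondecreasing_of_derive_nonneg (fun u => (w u - B) * exp (c * u))
             (fun u => (dw u + c * (w u - B)) * exp (c * u)));
      [lra | intros u Hu; apply is_derive_shift_exp, w_derive; lra |].
    intros u Hu; apply Rmult_le_pos; [| left; apply exp_pos].
    apply w_delay_ineq; [lra | apply Hprev; lra]. }
  assert (Ha : B <= w a) by (apply Hprev; lra).
  assert (0 <= (w a - B) * exp (c * a)) by (apply Rmult_le_pos; [lra | left; apply exp_pos]).
  assert (Hexp := exp_pos (c * t)).
  destruct (Rle_dec B (w t)) as [ok | ko]; [exact ok | nra].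
Qed.

Lemma delay_lower_bound_propagates (s : R) :
  (forall u, s <= u <= s + h -> B <= w u) ->
  forall t, s <= t <= T -> B <= w t.
Proof.
  intros Hbase.
  assert (Hsteps : forall n : nat, forall t, s <= t <= s + (INR n + 1) * h -> t <= T -> B <= w t).
  { induction n as [| n IH]; intros t Ht HtT.
    - apply Hbase; simpl in Ht; lra.
    - rewrite S_INR in Ht; assert (Hn := pos_INR n).
      destruct (Rle_dec t (s + (INR n + 1) * h)) as [Hle | Hgt]; [apply IH; lra |].
      apply (delay_lower_bound_step (s + (INR n + 1) * h)); [| lra | lra].
      intros u Hu; apply IH; nra. }
  intros t Ht; destruct (INR_unbounded ((T - s) / h)) as [n Hn].
  apply (Hsteps n); [split | lra]; [lra |].
  apply (Rmult_lt_compat_r h) in Hn; [| exact h_pos].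
  unfold Rdiv in Hn; rewrite Rmult_assoc, Rinv_l in Hn; nra.
Qed.

End MethodOfSteps.

Lemma delay_upper_bound_propagates (w dw : R -> R) (c h B T s : R) : 0 < h ->
  (forall t, t <= T -> is_derive w t (dw t)) ->
  (forall t, t <= T -> w (t - h) <= B -> dw t + c * (w t - B) <= 0) ->
  (forall u, s <= u <= s + h -> w u <= B) ->
  forall t, s <= t <= T -> w t <= B.
Proof.
  intros hh Hw Hineq Hbase t Ht.
  enough (- B <= - w t) by lra.
  apply (delay_lower_bound_propagates (fun t => - w t) (fun t => - dw t) c h (- B) T hh)
    with (s := s); [| | intros u Hu; specialize (Hbase u Hu); lra | exact Ht].
  - intros u Hu; exact (is_derive_opp w u (dw u) (Hw u Hu)).
  - intros u Hu Hdelay; assert (dw u + c * (w u - B) <= 0) by (apply Hineq; lra); lra.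
Qed.

Definition exp_weighted (psi : R -> R) (lambda t : R) : R := psi t * exp (- lambda * t).

Section DelayEquation.

Variables (h : R) (g psi : R -> R).
Hypothesis h_pos : 0 < h.
Hypothesis psi_ge0 : forall t, 0 <= psi t.
Hypothesis g_ge0 : forall x, 0 <= x -> 0 <= g x.
Hypothesis psi_derive : forall t, is_derive psi t (- psi t + g (psi (t - h))).

Lemma solution_exp_growth (s t : R) : s <= t -> psi s * exp (s - t) <= psi t.
Proof.
  intros Hst.
  assert (Hmono : (psi s - 0) * exp (1 * s) <= (psi t - 0) * exp (1 * t)).
  { apply (nondecreasing_of_derive_nonneg (fun u => (psi u - 0) * exp (1 * u))
      (fun u => ((- psi u + g (psi (u - h))) + 1 * (psi u - 0)) * exp (1 * u))); [exact Hst | |].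
    - intros u _; apply is_derive_shift_exp, psi_derive.
    - intros u _; apply Rmult_le_pos; [| left; apply exp_pos].
      assert (0 <= g (psi (u - h))) by apply g_ge0, psi_ge0; lra. }
  replace (1 * s) with ((s - t) + t) in Hmono by ring.
  rewrite exp_plus, Rmult_1_l in Hmono; assert (Hexp := exp_pos t).
  apply (Rmult_le_reg_r (exp t)); [exact Hexp | nra].
Qed.

Lemma solution_pos (K : R) : g 0 = 0 -> 0 < K -> is_lim psi p_infty K ->
  forall T, 0 < psi T.
Proof.
  intros g0 HK Hlim T; destruct (psi_ge0 T) as [HT | HT]; [exact HT | exfalso].
  assert (Hpast : forall s, s <= T -> psi s <= 0).
  { intros s Hs; assert (H := solution_exp_growth s T Hs).
    assert (Hexp := exp_pos (s - T)); rewrite <- HT in H; nra. }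
  apply is_lim_spec in Hlim; assert (HK2 : 0 < K / 2) by lra.
  destruct (Hlim (mkposreal _ HK2)) as [M HM]; simpl in HM.
  set (T' := Rmax (M + 1) T).
  assert (HT' : M + 1 <= T' /\ T <= T') by (split; [apply Rmax_l | apply Rmax_r]).
  assert (Hlate : psi T' <= 0).
  { apply (delay_upper_bound_propagates psi (fun t => - psi t + g (psi (t - h))) 1 h 0 T'
             (T - h) h_pos); [intros t _; apply psi_derive | | intros u Hu; apply Hpast; lra | lra].
    intros t _ Hdelay.
    assert (psi (t - h) = 0) as -> by (assert (0 <= psi (t - h)) by apply psi_ge0; lra).
    rewrite g0; lra. }
  assert (Hnear := HM T' ltac:(lra)); apply Rabs_def2 in Hnear; lra.
Qed.

Let exp_weighted_deriv (lambda t : R) : R :=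
  (- (1 + lambda) * psi t + g (psi (t - h))) * exp (- lambda * t).

Lemma is_derive_exp_weighted (lambda t : R) :
  is_derive (exp_weighted psi lambda) t (exp_weighted_deriv lambda t).
Proof.
  assert (H := is_derive_shift_exp psi _ (- lambda) 0 t (psi_derive t)).
  replace (exp_weighted_deriv lambda t)
    with ((- psi t + g (psi (t - h)) + - lambda * (psi t - 0)) * exp (- lambda * t))
    by (unfold exp_weighted_deriv; ring).
  apply (is_derive_ext (fun t => (psi t - 0) * exp (- lambda * t))); [| exact H].
  intros u; unfold exp_weighted; lra.
Qed.

(* With [1 + lambda = p exp (- lambda h)] the linear part [p x] of [g] is absorbed
   exactly, leaving the defect [g x - p x] at [x = psi (t - h)] as the error term. *)
Lemma exp_weighted_deriv_decomp (lambda p t : R) : 1 + lambda = p * exp (- lambda * h) ->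
  exp_weighted_deriv lambda t
  = (1 + lambda) * (exp_weighted psi lambda (t - h) - exp_weighted psi lambda t)
    + (g (psi (t - h)) - p * psi (t - h)) * exp (- lambda * t).
Proof.
  intros Hchar; unfold exp_weighted_deriv, exp_weighted; rewrite Hchar.
  replace (exp (- lambda * t)) with (exp (- lambda * h) * exp (- lambda * (t - h)))
    by (rewrite <- exp_plus; f_equal; ring).
  ring.
Qed.

Lemma one_add_rate_pos (lambda p : R) : 0 < p -> 1 + lambda = p * exp (- lambda * h) ->
  0 < 1 + lambda.
Proof. intros Hp ->; apply Rmult_lt_0_compat; [exact Hp | apply exp_pos]. Qed.

Lemma solution_le_exp (lambda p d T : R) : 0 < p -> 1 + lambda = p * exp (- lambda * h) ->
  (forall x, 0 <= x < d -> p * x <= g x) -> (forall t, t <= T -> psi (t - h) < d) ->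
  forall t, t <= T - h ->
    psi t <= exp_weighted psi lambda T * exp ((1 + lambda) * h) * exp (lambda * t).
Proof.
  intros Hp Hchar Hg Hsmall t Ht; assert (Hc := one_add_rate_pos _ _ Hp Hchar).
  set (B := psi t * exp (- lambda * t - (1 + lambda) * h)).
  assert (HB : B <= exp_weighted psi lambda T).
  { apply (delay_lower_bound_propagates (exp_weighted psi lambda) (exp_weighted_deriv lambda)
             (1 + lambda) h B T h_pos) with (s := t);
      [intros u _; apply is_derive_exp_weighted | | | lra].
    - intros u Hu Hdelay; rewrite (exp_weighted_deriv_decomp _ _ _ Hchar).
      assert (0 <= (g (psi (u - h)) - p * psi (u - h)) * exp (- lambda * u)).
      { apply Rmult_le_pos; [| left; apply exp_pos].
        enough (p * psi (u - h) <= g (psi (u - h))) by lra.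
        apply Hg; split; [apply psi_ge0 | now apply Hsmall]. }
      nra.
    - intros u Hu; unfold B, exp_weighted.
      apply (Rle_trans _ (psi t * exp (t - u) * exp (- lambda * u))).
      + rewrite Rmult_assoc, <- exp_plus.
        apply Rmult_le_compat_l; [apply psi_ge0 | apply exp_le; nra].
      + apply Rmult_le_compat_r; [left; apply exp_pos | apply solution_exp_growth; lra]. }
  assert (Hpsi_t : psi t = B * exp ((1 + lambda) * h) * exp (lambda * t))
    by (unfold B; rewrite !Rmult_assoc, <- !exp_plus;
        replace (_ + _) with 0 by ring; rewrite exp_0; ring).
  rewrite Hpsi_t; apply Rmult_le_compat_r; [left; apply exp_pos |].
  apply Rmult_le_compat_r; [left; apply exp_pos | exact HB].
Qed.

Lemma solution_ge_exp (lambda p d T : R) : 0 < p -> 1 + lambda = p * exp (- lambda * h) ->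
  (forall x, 0 <= x < d -> g x <= p * x) -> (forall t, t <= T -> psi (t - h) < d) ->
  0 < psi T ->
  forall t, t <= T ->
    exp_weighted psi lambda T / 2 * exp (- (1 + lambda) * h) * exp (lambda * t) <= psi t.
Proof.
  intros Hp Hchar Hg Hsmall HT t Ht; assert (Hc := one_add_rate_pos _ _ Hp Hchar).
  assert (HwT : 0 < exp_weighted psi lambda T)
    by (apply Rmult_lt_0_compat; [exact HT | apply exp_pos]).
  set (b := exp_weighted psi lambda T / 2).
  assert (Hb : 0 < b) by (unfold b; lra).
  assert (Hwitness : exists u, t - h <= u <= t /\ b < exp_weighted psi lambda u).
  { apply NNPP; intros Hn.
    enough (exp_weighted psi lambda T <= b) by (unfold b in *; lra).
    apply (delay_upper_bound_propagates (exp_weighted psi lambda) (exp_weighted_deriv lambda)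
             (1 + lambda) h b T (t - h) h_pos);
      [intros u _; apply is_derive_exp_weighted | | | lra].
    - intros u Hu Hdelay; rewrite (exp_weighted_deriv_decomp _ _ _ Hchar).
      assert (g (psi (u - h)) <= p * psi (u - h))
        by (apply Hg; split; [apply psi_ge0 | now apply Hsmall]).
      assert (Hexp := exp_pos (- lambda * u)); nra.
    - intros u Hu; apply Rnot_lt_le; intros Hlt; apply Hn; exists u; split; [lra | exact Hlt]. }
  destruct Hwitness as [u [Hu Hbu]].
  assert (Hpsi_u : psi u = exp_weighted psi lambda u * exp (lambda * u))
    by (unfold exp_weighted; rewrite Rmult_assoc, <- exp_plus;
        replace (_ + _) with 0 by ring; rewrite exp_0; ring).
  apply (Rle_trans _ (psi u * exp (u - t))); [| apply solution_exp_growth; lra].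
  rewrite Hpsi_u, !Rmult_assoc, <- !exp_plus.
  apply Rmult_le_compat; [lra | left; apply exp_pos | lra | apply exp_le; nra].
Qed.

End DelayEquation.

Theorem lemma6 (h K : R) (g : R -> R) (p1 p2 lambda1 lambda2 : R)
  (hh : 0 < h) (hK : 0 < K)
  (hgc : continuous_on_Rplus g)
  (hgpos : forall x, 0 <= x -> 0 <= g x)
  (hg0 : g 0 = 0) (hgK : g K = K)
  (hliminf1 : Rbar_lt (Finite 1) (liminf_right0 (fun x => g x / x)))
  (hp1 : 1 < p1)
  (hp1l : Rbar_lt (Finite p1) (liminf_right0 (fun x => g x / x)))
  (hll : Rbar_le (liminf_right0 (fun x => g x / x))
                 (limsup_right0 (fun x => g x / x)))
  (hp2 : Rbar_lt (limsup_right0 (fun x => g x / x)) (Finite p2))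
  (hl1 : 0 < lambda1) (hl1e : lambda1 = -1 + p1 * exp (- lambda1 * h))
  (hl2 : 0 < lambda2) (hl2e : lambda2 = -1 + p2 * exp (- lambda2 * h)) :
  forall psi : R -> R,
    (forall t, 0 <= psi t) ->
    (forall t, derivable_pt_lim psi t (- psi t + g (psi (t - h)))) ->
    is_lim psi m_infty 0 ->
    is_lim psi p_infty K ->
    exists tau C1 C2, tau < 0 /\ 0 < C1 /\ 0 < C2 /\
      forall t, t <= tau ->
        C1 * exp (lambda2 * t) <= psi t /\ psi t <= C2 * exp (lambda1 * t).
Proof.
  intros psi psi_ge0 psi_ode psi_lim_m psi_lim_p.
  assert (psi_derive : forall t, is_derive psi t (- psi t + g (psi (t - h))))
    by (intros t; apply is_derive_Reals, psi_ode).
  destruct (mul_le_near0_of_liminf_ratio g p1 hg0 hp1l) as [d1 [Hd1 Hg1]].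
  destruct (le_mul_near0_of_limsup_ratio g p2 hg0 hp2) as [d2 [Hd2 Hg2]].
  assert (Hd : 0 < Rmin d1 d2) by (apply Rmin_glb_lt; lra).
  apply is_lim_spec in psi_lim_m; destruct (psi_lim_m (mkposreal _ Hd)) as [M HM]; simpl in HM.
  set (T := Rmin M 0 - 1).
  assert (HT : T < 0 /\ T < M) by (unfold T; pose proof (Rmin_l M 0); pose proof (Rmin_r M 0); lra).
  assert (Hsmall : forall d, Rmin d1 d2 <= d -> forall t, t <= T -> psi (t - h) < d).
  { intros d Hmin t Ht; assert (H := HM (t - h) ltac:(lra)); apply Rabs_def2 in H; lra. }
  assert (HpsiT := solution_pos h g psi hh psi_ge0 hgpos psi_derive K hg0 hK psi_lim_p T).
  exists (T - h), (exp_weighted psi lambda2 T / 2 * exp (- (1 + lambda2) * h)),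
    (exp_weighted psi lambda1 T * exp ((1 + lambda1) * h)).
  assert (Hw : forall lambda, 0 < exp_weighted psi lambda T)
    by (intros lambda; apply Rmult_lt_0_compat; [exact HpsiT | apply exp_pos]).
  assert (He1 := exp_pos (- (1 + lambda2) * h)); assert (He2 := exp_pos ((1 + lambda1) * h)).
  assert (Hw1 := Hw lambda1); assert (Hw2 := Hw lambda2).
  split; [lra |]; split; [| split]; [nra | nra |].
  intros t Ht; split.
  - apply (solution_ge_exp h g psi hh psi_ge0 hgpos psi_derive lambda2 p2 d2 T);
      [| lra | exact Hg2 | apply Hsmall, Rmin_r | exact HpsiT | lra].
    assert (He := exp_pos (- lambda2 * h)); nra.
  - apply (solution_le_exp h g psi hh psi_ge0 hgpos psi_derive lambda1 p1 d1 T);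
      [lra | lra | exact Hg1 | apply Hsmall, Rmin_l | exact Ht].
Qed.
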